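(* Let $X$ be a semigroup and $Z\subset X$ a subsemigroup such that $X\setminus Z$ is an ideal in $X$. If $\mathcal A\in\upsilon(Z)\subset\upsilon(X)$ and $\mathcal B\in\upsilon(X)$ satisfy $\mathcal A=\mathcal A*\mathcal B*\mathcal A$, then $\mathcal A=\mathcal A*\mathcal B_Z*\mathcal A$, where $\mathcal B_Z=\{B\in\mathcal B: B\subset Z\}\in\upsilon(Z)$.
   Context: An upfamily on a set $X$ is a family of nonempty subsets of $X$ closed under taking supersets in $X$; $\upsilon(X)$ is the set of all upfamilies, with operation $\mathcal A*\mathcal B=\big\langle \bigcup_{a\in A} a*B_a : A\in\mathcal A,\ \{B_a\}_{a\in A}\subset\mathcal B\big\rangle$, where $\langle\mathcal C\rangle=\{A\subset X:\exists C\in\mathcal C,\ C\subset A\}$. For $Z\subset X$, $\upsilon(Z)$ is identified with the subset $\{\{A\subset X: A\cap Z\in\mathcal F\}:\mathcal F\in\upsilon(Z)\}$ of $\upsilon(X)$ (the image under the map induced by inclusion), i.e. upfamilies on $X$ having a member contained in $Z$ and generated by their members contained in $Z$. A nonempty subset $I$ of a semigroup $X$ is an ideal if $XI\cup IX\subset I$. *)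

Definition subset {X : Type} (A B : X -> Prop) : Prop := forall x, A x -> B x.

Definition family (X : Type) := (X -> Prop) -> Prop.

Definition is_upfamily {X : Type} (F : family X) : Prop :=
  (forall A, F A -> exists x, A x) /\
  (forall A B, F A -> subset A B -> F B).

(* An upfamily on Z ⊂ X: subsets of Z are represented as subsets of X
   contained in Z; members are nonempty subsets of Z, closed under
   supersets inside Z. *)
Definition is_upfamily_on {X : Type} (Z : X -> Prop) (F : family X) : Prop :=
  (forall A, F A -> subset A Z) /\
  (forall A, F A -> exists x, A x) /\
  (forall A B, F A -> subset A B -> subset B Z -> F B).

(* The map υ(Z) -> υ(X) induced by inclusion: F |-> {A ⊂ X : A ∩ Z ∈ F}. *)
Definition embed {X : Type} (Z : X -> Prop) (F : family X) : family X :=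
  fun A => F (fun x => A x /\ Z x).

Definition in_upsilon_sub {X : Type} (Z : X -> Prop) (A : family X) : Prop :=
  exists F, is_upfamily_on Z F /\ A = embed Z F.

Definition restrict {X : Type} (Z : X -> Prop) (B : family X) : family X :=
  embed Z (fun S => B S /\ subset S Z).

(* 𝒜 * 𝓑 = < ⋃_{a∈A} a*B_a : A ∈ 𝒜, {B_a}_{a∈A} ⊂ 𝓑 > *)
Definition fprod {X : Type} (op : X -> X -> X) (A B : family X) : family X :=
  fun S => exists A0, A A0 /\ exists f : X -> (X -> Prop),
    (forall a, A0 a -> B (f a)) /\
    (forall x, (exists a b, A0 a /\ f a b /\ x = op a b) -> S x).

Definition is_subsemigroup {X : Type} (op : X -> X -> X) (Z : X -> Prop) : Prop :=
  forall x y, Z x -> Z y -> Z (op x y).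

Definition is_ideal {X : Type} (op : X -> X -> X) (I : X -> Prop) : Prop :=
  (exists x, I x) /\ (forall x y, I y -> I (op x y) /\ I (op y x)).

From Stdlib Require Import FunctionalExtensionality PropExtensionality Classical.

Set Implicit Arguments.

(* The inclusion A*B_Z*A ⊂ A*B*A = A is monotonicity of the
   product, since B_Z ⊂ B.  Conversely let S ∈ A.  As A comes from υ(Z),
   also S ∩ Z ∈ A = A*B*A, so S ∩ Z ⊃ ⋃_{a∈A0} a*C_a with A0 ∈ A*B and
   C_a ∈ A.  Because X \ Z is an ideal, a product lying in Z has both
   factors in Z; the sets C_a are nonempty, hence A0 ⊂ Z.  Writing
   A0 ⊃ ⋃_{a∈A1} a*D_a with D_a ∈ B, the same argument gives D_a ⊂ Z, so
   D_a ∈ B_Z and A0 ∈ A*B_Z; therefore S ∩ Z, and with it S, lies in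
   A*B_Z*A. *)

Section Families.

Variable X : Type.
Variable op : X -> X -> X.

Definition subfamily (C D : family X) : Prop := forall S, C S -> D S.

Definition up_closed (C : family X) : Prop :=
  forall S T, C S -> subset S T -> C T.

Lemma subfamily_antisym (C D : family X) :
  subfamily C D -> subfamily D C -> C = D.
Proof.
  intros CD DC. apply functional_extensionality. intro S.
  apply propositional_extensionality. split; [apply CD | apply DC].
Qed.

Lemma fprod_mono (C C' D D' : family X) :
  subfamily C C' -> subfamily D D' ->
  subfamily (fprod op C D) (fprod op C' D').
Proof.
  intros CC' DD' S [A0 [hA0 [f [hf hsub]]]].
  exists A0. split; [now apply CC'|].
  exists f. split; [intros a ha; now apply DD', hf | exact hsub].
Qed.

Lemma fprod_up_closed (C D : family X) : up_closed (fprod op C D).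
Proof.
  intros S T [A0 [hA0 [f [hf hsub]]]] ST.
  exists A0. split; [exact hA0|].
  exists f. split; [exact hf|]. intros x hx. now apply ST, hsub.
Qed.

Variable Z : X -> Prop.

Lemma factors_in_Z :
  is_ideal op (fun x => ~ Z x) -> forall x y, Z (op x y) -> Z x /\ Z y.
Proof.
  intros [_ HI] x y hxy. split; apply NNPP; intro hn.
  - exact (proj2 (HI y x hn) hxy).
  - exact (proj1 (HI x y hn) hxy).
Qed.

Hypothesis HI : is_ideal op (fun x => ~ Z x).

Lemma fprod_left_in_Z (C D : family X) (S : X -> Prop) :
  (forall T, D T -> exists x, T x) -> subset S Z ->
  fprod op C D S -> fprod op (fun T => C T /\ subset T Z) D S.
Proof.
  intros Dne SZ [A0 [hA0 [f [hf hsub]]]].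
  exists A0. split; [split; [exact hA0|] | exists f; now split].
  intros a ha. destruct (Dne _ (hf a ha)) as [c hc].
  apply (factors_in_Z HI (x:=a) (y:=c)), SZ, hsub. now exists a, c.
Qed.

Lemma fprod_right_restrict (C B : family X) (S : X -> Prop) :
  up_closed B -> subset S Z ->
  fprod op C B S -> fprod op C (restrict Z B) S.
Proof.
  intros Bup SZ [A0 [hA0 [f [hf hsub]]]].
  exists A0. split; [exact hA0|].
  exists f. split; [|exact hsub]. intros a ha. split.
  - apply (Bup _ _ (hf a ha)). intros b hb. split; [exact hb|].
    apply (factors_in_Z HI (x:=a) (y:=b)), SZ, hsub. now exists a, b.
  - now intros x [_ hx].
Qed.

End Families.

Section UpsilonZ.

Variable X : Type.
Variable Z : X -> Prop.

Lemma upsilon_sub_meets (A : family X) :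
  in_upsilon_sub Z A -> forall T, A T -> exists x, T x /\ Z x.
Proof.
  intros [F [[_ [Fne _]] ->]] T hT. exact (Fne _ hT).
Qed.

Lemma upsilon_sub_trace (A : family X) :
  in_upsilon_sub Z A -> forall S, A S -> A (fun x => S x /\ Z x).
Proof.
  intros [F [[_ [_ Fup]] ->]] S hS. unfold embed in *.
  apply (Fup _ _ hS); intros x hx; tauto.
Qed.

Lemma restrict_subfamily (B : family X) :
  up_closed B -> subfamily (restrict Z B) B.
Proof.
  intros Bup S [hS _]. apply (Bup _ _ hS). now intros x [hx _].
Qed.

End UpsilonZ.

Theorem lemma3p3 (X : Type) (op : X -> X -> X)
  (assoc : forall x y z, op (op x y) z = op x (op y z))
  (Z : X -> Prop) (HZ : is_subsemigroup op Z)
  (HI : is_ideal op (fun x => ~ Z x))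
  (A B : family X) (HA : in_upsilon_sub Z A) (HB : is_upfamily B)
  (H : A = fprod op (fprod op A B) A) :
  A = fprod op (fprod op A (restrict Z B)) A.
Proof.
  assert (Bup : up_closed B) by exact (proj2 HB).
  apply subfamily_antisym.
  - intros S hS.
    assert (SZ : subset (fun x => S x /\ Z x) Z) by now intros x [_ hx].
    assert (hSZ : A (fun x => S x /\ Z x)) by now apply upsilon_sub_trace.
    rewrite H in hSZ.
    assert (Ane : forall T, A T -> exists x, T x).
    { intros T hT. destruct (upsilon_sub_meets HA _ hT) as [x [hx _]].
      now exists x. }
    apply (fprod_left_in_Z HI Ane SZ) in hSZ.
    assert (hSZ' : fprod op (fprod op A (restrict Z B)) A
                     (fun x => S x /\ Z x)).
    { revert hSZ. apply fprod_mono; [| now intros T].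
      intros T [hT TZ]. now apply (fprod_right_restrict HI). }
    apply (fprod_up_closed hSZ'). now intros x [hx _].
  - intros S hS. rewrite H. revert hS. apply fprod_mono; [| now intros T].
    apply fprod_mono; [now intros T | now apply restrict_subfamily].
Qed.
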